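(* Let $a,b,c$ be positive integers. For any non-negative integers $m,n$, in $\mathfrak{H}^1$ we have \[d(z_c^mz_bz_a^n)=\sum_{k=0}^m\sum_{l=0}^n(-1)^{k+l}\,z_a^lz_bz_c^k*d(z_c^{m-k})*d(z_a^{n-l}).\]
   Context: $\mathfrak{H}=\mathbb{Q}\langle x,y\rangle$ is the non-commutative polynomial algebra in two indeterminates, and $\mathfrak{H}^1=\mathbb{Q}+\mathfrak{H}y$. Put $z_k=x^{k-1}y$ for $k\geq 1$. Let $\gamma$ be the algebra automorphism of $\mathfrak{H}$ with $\gamma(x)=x$, $\gamma(y)=x+y$, and let $d\colon\mathfrak{H}^1\to\mathfrak{H}^1$ be the $\mathbb{Q}$-linear map with $d(1)=1$ and $d(wy)=\gamma(w)y$ for every word $w\in\mathfrak{H}$. The harmonic product $*$ is the $\mathbb{Q}$-bilinear product on $\mathfrak{H}^1$ defined inductively by $1*w=w*1=w$ and $z_kw*z_lw'=z_k(w*z_lw')+z_l(z_kw*w')+z_{k+l}(w*w')$ for $k,l\geq 1$, $w,w'\in\mathfrak{H}^1$; it is commutative and associative. Powers $z_c^m$ denote concatenation powers (words). *)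

From mathcomp Require Import all_boot all_order all_algebra.
Set Implicit Arguments. Unset Strict Implicit. Unset Printing Implicit Defensive.
Import GRing.Theory Num.Theory.
Local Open Scope ring_scope.

Definition word := seq bool.
Definition lx : bool := false.
Definition ly : bool := true.

(* Elements of H = Q<x,y>: finite formal Q-linear combinations of words,
   represented as lists of (coefficient, word); two representations denote
   the same element iff all their coefficients agree (see [peq]). *)
Definition poly := seq (rat * word).

Definition coef (p : poly) (w : word) : rat :=
  \sum_(cw <- p | cw.2 == w) cw.1.

Definition peq (p q : poly) : Prop := forall w : word, coef p w = coef q w.

Definition pone : poly := [:: (1, [::])].
Definition pword (w : word) : poly := [:: (1, w)].
Definition padd (p q : poly) : poly := p ++ q.
Definition pscale (a : rat) (p : poly) : poly := [seq (a * cw.1, cw.2) | cw <- p].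
Definition pmul (p q : poly) : poly :=
  [seq (cw.1 * dv.1, cw.2 ++ dv.2) | cw <- p, dv <- q].
Definition psum (ps : seq poly) : poly := flatten ps.

Definition z (k : nat) : word := rcons (nseq k.-1 lx) ly.
Definition zpow (k m : nat) : word := flatten (nseq m (z k)).

Definition gamma_letter (b : bool) : poly :=
  if b then [:: (1, [:: lx]); (1, [:: ly])] else [:: (1, [:: lx])].
Definition gamma_word (w : word) : poly :=
  foldr (fun b acc => pmul (gamma_letter b) acc) pone w.

(* d on words of H^1: d(1) = 1, d(w y) = gamma(w) y.
   (Words ending in x are not in H^1; d is never applied to them below,
   we send them to 0.) *)
Definition d_word (w : word) : poly :=
  if w == [::] then pone
  else if last lx w then pmul (gamma_word (take (size w).-1 w)) (pword [:: ly])
  else [::].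
Definition d (p : poly) : poly := flatten [seq pscale cw.1 (d_word cw.2) | cw <- p].

(* Decomposition of a word of H^1 as z_{k1} ... z_{kr} (index sequence). *)
Fixpoint toz_aux (n : nat) (w : word) : seq nat :=
  match w with
  | [::] => [::]
  | b :: w' => if b then n.+1 :: toz_aux 0 w' else toz_aux n.+1 w'
  end.
Definition toz (w : word) : seq nat := toz_aux 0 w.
Definition fromz (s : seq nat) : word := flatten (map z s).

(* Harmonic (stuffle) product on index sequences:
   z_k u * z_l v = z_k (u * z_l v) + z_l (z_k u * v) + z_{k+l} (u * v). *)
Fixpoint stuffle (u : seq nat) : seq nat -> seq (rat * seq nat) :=
  match u with
  | [::] => fun v => [:: (1, v)]
  | k :: u' =>
      fix st2 (v : seq nat) : seq (rat * seq nat) :=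
        match v with
        | [::] => [:: (1, k :: u')]
        | l :: v' =>
            [seq (e.1, k :: e.2) | e <- stuffle u' v]
            ++ [seq (e.1, l :: e.2) | e <- st2 v']
            ++ [seq (e.1, (k + l)%N :: e.2) | e <- stuffle u' v']
        end
  end.

Definition harm (p q : poly) : poly :=
  flatten [seq [seq (cw.1 * dv.1 * e.1, fromz e.2) | e <- stuffle (toz cw.2) (toz dv.2)]
          | cw <- p, dv <- q].

(* Write the words of H^1 as index sequences, z_{k1} ... z_{kr} <-> [k1; ...; kr], and
   work in the monoid algebra on such sequences, where * becomes the stuffle product
   [hprod] and d becomes [dz]: since gamma(z_k) = x^(k-1) (x + y), we have
   d(z_k z_l w) = z_k d(z_l w) + d(z_(k+l) w).  The key fact is the antipode-like
   identity, for a nonempty word z_{t1} ... z_{tr},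
     sum_(j = 0..r) (-1)^j (z_{tj} ... z_{t1}) * d(z_{t(j+1)} ... z_{tr}) = 0,
   which telescopes.  Applied to z_c^m z_b z_a^n it shows that X_m = d(z_c^m z_b z_a^n)
   satisfies
     sum_(j <= m) (-1)^j z_c^j * X_(m-j) = (-1)^m sum_(l <= n) (-1)^l z_a^l z_b z_c^m * d(z_a^(n-l)),
   and applied to z_c^p it shows that the right-hand side of the proposition satisfies
   the same recursion.  The j = 0 term of the recursion is X_m itself, so both sides
   agree by strong induction on m. *)

From Pilot Require Import Defs.
From HB Require Import structures.
From mathcomp Require Import all_boot all_order all_algebra.
From mathcomp Require Import finmap monalg zify.
Import GRing.Theory Num.Theory.
Local Open Scope ring_scope.

Section LinearFun.
Context {R : pzRingType} {U V W : lmodType R}.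

Lemma linear_funD {f : U -> V} : linear f -> {morph f : x y / x + y}.
Proof. by move=> fL x y; rewrite -[x in LHS]scale1r fL scale1r. Qed.

Lemma linear_fun0 {f : U -> V} : linear f -> f 0 = 0.
Proof. by move=> fL; apply: (addrI (f 0)); rewrite -linear_funD // !addr0. Qed.

Lemma linear_funZ {f : U -> V} : linear f -> scalable f.
Proof. exact: scalable_linear. Qed.

Lemma linear_fun_sum {f : U -> V} : linear f ->
  forall I (r : seq I) (P : pred I) (F : I -> U),
  f (\sum_(i <- r | P i) F i) = \sum_(i <- r | P i) f (F i).
Proof.
move=> fL I r P F; elim/big_rec2: _ => [|i x y _ <-]; first exact: linear_fun0.
exact: linear_funD.
Qed.

Lemma linear_fun_comp {f : V -> W} {g : U -> V} :
  linear f -> linear g -> linear (fun x => f (g x)).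
Proof. by move=> fL gL a x y; rewrite /= gL fL. Qed.

Lemma linear_fun_add {f g : U -> V} : linear f -> linear g -> linear (fun x => f x + g x).
Proof. by move=> fL gL a x y; rewrite /= fL gL scalerDr addrACA. Qed.

End LinearFun.

HB.lock Definition linext {R : comNzRingType} {K : choiceType} {V : lmodType R}
    (h : K -> V) (g : {malg R[K]}) : V :=
  \sum_(k <- msupp g) g@_k *: h k.

Section LinearExtension.
Context {R : comNzRingType} {K : choiceType} {V : lmodType R}.
Implicit Types (g : {malg R[K]}) (h : K -> V).

Lemma linextEw h {D : {fset K}} {g} : (msupp g `<=` D)%fset ->
  linext h g = \sum_(k <- D) g@_k *: h k.
Proof.
move=> le; rewrite linext.unlock (big_fset_incl _ le) // => k _ /mcoeff_outdom ->.
by rewrite scale0r.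
Qed.

Lemma linextD h g1 g2 : linext h (g1 + g2) = linext h g1 + linext h g2.
Proof.
rewrite (linextEw h (msuppD_le g1 g2)) (linextEw h (fsubsetUl _ (msupp g2))).
rewrite (linextEw h (fsubsetUr (msupp g1) _)) -big_split.
by apply: eq_bigr => k _; rewrite mcoeffD scalerDl.
Qed.

Lemma linextZ h a g : linext h (a *: g) = a *: linext h g.
Proof.
rewrite (linextEw h (msuppZ_le a g)) linext.unlock scaler_sumr; apply: eq_bigr => k _.
by rewrite mcoeffZ scalerA.
Qed.

Lemma linext_linear h : linear (linext h).
Proof. by move=> a g1 g2; rewrite linextD linextZ. Qed.

Lemma linextU h c k : linext h << c *g k >> = c *: h k.
Proof. by rewrite (linextEw h msuppU_le) big_seq_fset1 mcoeffUU. Qed.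

Lemma linextU1 h k : linext h << k >> = h k.
Proof. by rewrite linextU scale1r. Qed.

Lemma eq_in_linext h1 h2 g :
  {in msupp g, h1 =1 h2} -> linext h1 g = linext h2 g.
Proof. by move=> e; rewrite linext.unlock; apply: eq_big_seq => k /e ->. Qed.

Lemma eq_linext h1 h2 g : h1 =1 h2 -> linext h1 g = linext h2 g.
Proof. by move=> e; apply: eq_in_linext => k _; apply: e. Qed.

Lemma linext_scaleD a h1 h2 g :
  linext (fun k => a *: h1 k + h2 k) g = a *: linext h1 g + linext h2 g.
Proof.
rewrite linext.unlock scaler_sumr -big_split; apply: eq_bigr => k _.
by rewrite scalerDr !scalerA mulrC.
Qed.

Lemma monalgUZ c k : << c *g k >> = c *: (<< k >> : {malg R[K]}).
Proof. by apply/malgP => k'; rewrite mcoeffZ !mcoeffU mulr_natr. Qed.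

Lemma linear_malg_ext (f1 f2 : {malg R[K]} -> V) :
  linear f1 -> linear f2 -> (forall k, f1 << k >> = f2 << k >>) -> f1 =1 f2.
Proof.
move=> f1L f2L e g; rewrite (monalgE g) !linear_fun_sum //.
by apply: eq_bigr => k _; rewrite monalgUZ !linear_funZ // e.
Qed.

Lemma linext_sum h (T : Type) (r : seq T) (c : T -> R) (key : T -> K) :
  linext h (\sum_(x <- r) c x *: << key x >>) = \sum_(x <- r) c x *: h (key x).
Proof.
rewrite linear_fun_sum; last exact: linext_linear.
by apply: eq_bigr => x _; rewrite linear_funZ ?linextU1 //; apply: linext_linear.
Qed.

End LinearExtension.

Lemma linext_comp (R : comNzRingType) (K : choiceType) (V W : lmodType R)
    (f : V -> W) (h : K -> V) (g : {malg R[K]}) :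
  linear f -> f (linext h g) = linext (f \o h) g.
Proof.
move=> fL; rewrite linext.unlock linear_fun_sum //; apply: eq_bigr => k _.
exact: linear_funZ.
Qed.

Lemma mcoeff_linext (R : comNzRingType) (K L : choiceType) (h : K -> {malg R[L]})
    (g : {malg R[K]}) (l : L) :
  (linext h g)@_l = \sum_(k <- msupp g) g@_k * (h k)@_l.
Proof.
by rewrite linext.unlock; elim/big_rec2: _ => [|k x y _ <-];
  rewrite ?mcoeff0 ?mcoeffD ?mcoeffZ.
Qed.

Lemma linext_unit (R : comNzRingType) (K : choiceType) (g : {malg R[K]}) :
  linext (fun k => << k >>) g = g.
Proof.
by apply: (linear_malg_ext _ id (linext_linear _)) => // k; rewrite linextU1.
Qed.

(* [Hz] is H^1 in the basis z_{k1} ... z_{kr}, indexed by [k1; ...; kr]. *)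
Local Notation Hz := {malg rat[seq nat]}.

Definition zcons (k : nat) : Hz -> Hz := linext (fun s => << k :: s >>).

Definition harmw (u v : seq nat) : Hz := \sum_(e <- stuffle u v) e.1 *: << e.2 >>.

Definition hprod (F G : Hz) : Hz := linext (fun u => linext (harmw u) G) F.

Lemma zcons_linear k : linear (zcons k).
Proof. exact: linext_linear. Qed.

Lemma zconsU k s : zcons k << s >> = << k :: s >>.
Proof. exact: linextU1. Qed.

Lemma zcons_sum k (r : seq (rat * seq nat)) :
  zcons k (\sum_(e <- r) e.1 *: << e.2 >>) =
  \sum_(e <- [seq (e.1, k :: e.2) | e <- r]) e.1 *: << e.2 >>.
Proof. by rewrite /zcons linext_sum big_map. Qed.

Lemma harmw_nill v : harmw [::] v = << v >>.
Proof. by rewrite /harmw /= big_seq1 scale1r. Qed.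

Lemma harmw_nilr u : harmw u [::] = << u >>.
Proof. by case: u => [|k u]; rewrite /harmw /= big_seq1 scale1r. Qed.

Lemma harmw_cons k u l v :
  harmw (k :: u) (l :: v) = zcons k (harmw u (l :: v)) + zcons l (harmw (k :: u) v)
                            + zcons (k + l) (harmw u v).
Proof. by rewrite /harmw /= !zcons_sum !big_cat /= addrA. Qed.

Lemma harmwC u v : harmw u v = harmw v u.
Proof.
elim: u v => [|k u IHu] v; first by rewrite harmw_nill harmw_nilr.
elim: v => [|l v IHv]; first by rewrite harmw_nill harmw_nilr.
by rewrite !harmw_cons [harmw u (l :: v)]IHu [harmw u v]IHu IHv addnC [zcons k _ + _]addrC.
Qed.

Lemma hprod_linearl G : linear (hprod ^~ G).
Proof. exact: linext_linear. Qed.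

Lemma hprod_linearr F : linear (hprod F).
Proof.
move=> a x y; rewrite /hprod -linext_scaleD; apply: eq_linext => u.
by rewrite linextD linextZ.
Qed.

Lemma zconsD k : {morph zcons k : F G / F + G}.
Proof. exact: linear_funD (zcons_linear k). Qed.

Lemma hprodDl F1 F2 G : hprod (F1 + F2) G = hprod F1 G + hprod F2 G.
Proof. exact: linear_funD (hprod_linearl G) _ _. Qed.

Lemma hprodDr F G1 G2 : hprod F (G1 + G2) = hprod F G1 + hprod F G2.
Proof. exact: linear_funD (hprod_linearr F) _ _. Qed.

Lemma hprodZl a F G : hprod (a *: F) G = a *: hprod F G.
Proof. exact: linear_funZ (hprod_linearl G) _ _. Qed.

Lemma hprodZr a F G : hprod F (a *: G) = a *: hprod F G.
Proof. exact: linear_funZ (hprod_linearr F) _ _. Qed.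

Lemma hprod_suml I (r : seq I) (P : pred I) (F : I -> Hz) G :
  hprod (\sum_(i <- r | P i) F i) G = \sum_(i <- r | P i) hprod (F i) G.
Proof. exact: linear_fun_sum (hprod_linearl G) _ _ _ _. Qed.

Lemma hprod_sumr I (r : seq I) (P : pred I) F (G : I -> Hz) :
  hprod F (\sum_(i <- r | P i) G i) = \sum_(i <- r | P i) hprod F (G i).
Proof. exact: linear_fun_sum (hprod_linearr F) _ _ _ _. Qed.

Lemma hprodUl u G : hprod << u >> G = linext (harmw u) G.
Proof. exact: linextU1. Qed.

Lemma hprodU u v : hprod << u >> << v >> = harmw u v.
Proof. by rewrite hprodUl linextU1. Qed.

Lemma hprod1l G : hprod << [::] >> G = G.
Proof. by rewrite hprodUl -[RHS]linext_unit; apply: eq_linext => v; exact: harmw_nill. Qed.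

Lemma hprod1r F : hprod F << [::] >> = F.
Proof.
rewrite -[RHS]linext_unit; apply: eq_linext => u.
by rewrite linextU1 harmw_nilr.
Qed.

Lemma hprodC F G : hprod F G = hprod G F.
Proof.
move: F; apply: linear_malg_ext (hprod_linearl G) (hprod_linearr G) _ => u.
move: G; apply: linear_malg_ext (hprod_linearr _) (hprod_linearl _) _ => v.
by rewrite !hprodU harmwC.
Qed.

Lemma hprod_zcons k l F G :
  hprod (zcons k F) (zcons l G) = zcons k (hprod F (zcons l G))
    + zcons l (hprod (zcons k F) G) + zcons (k + l) (hprod F G).
Proof.
have zcL := zcons_linear; have hlL := hprod_linearl; have hrL := hprod_linearr.
move: F; apply: linear_malg_ext => [||u].
- exact: linear_fun_comp (hlL _) (zcL k).
- apply: linear_fun_add; first apply: linear_fun_add.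
  + exact: linear_fun_comp (zcL k) (hlL _).
  + exact: linear_fun_comp (zcL l) (linear_fun_comp (hlL _) (zcL k)).
  + exact: linear_fun_comp (zcL _) (hlL _).
move: G; apply: linear_malg_ext => [||v].
- exact: linear_fun_comp (hrL _) (zcL l).
- apply: linear_fun_add; first apply: linear_fun_add.
  + exact: linear_fun_comp (zcL k) (linear_fun_comp (hrL _) (zcL l)).
  + exact: linear_fun_comp (zcL l) (hrL _).
  + exact: linear_fun_comp (zcL _) (hrL _).
by rewrite /= !zconsU !hprodU harmw_cons.
Qed.

Lemma addr_regroup_mid (V : nmodType) (a1 a2 a3 b1 b2 b3 c1 c2 c3 : V) :
  a1 + a2 + a3 + (b1 + b2 + b3) + (c1 + c2 + c3) =
  a1 + (a2 + b2 + c2) + a3 + b1 + b3 + c1 + c3.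
Proof.
pose f i := nth 0 [:: a1; a2; a3; b1; b2; b3; c1; c2; c3] i.
transitivity (\sum_(i <- [:: 0; 1; 2; 3; 4; 5; 6; 7; 8]%N) f i).
  by rewrite !big_cons big_nil /f /= addr0 !addrA.
rewrite (perm_big [:: 0; 1; 4; 7; 2; 3; 5; 6; 8]%N) //.
by rewrite !big_cons big_nil /f /= addr0 !addrA.
Qed.

Lemma addr_regroup_first (V : nmodType) (a1 a2 a3 b1 b2 b3 c1 c2 c3 : V) :
  a1 + a2 + a3 + (b1 + b2 + b3) + (c1 + c2 + c3) =
  (a1 + b1 + c1) + b2 + b3 + a2 + c2 + a3 + c3.
Proof.
pose f i := nth 0 [:: a1; a2; a3; b1; b2; b3; c1; c2; c3] i.
transitivity (\sum_(i <- [:: 0; 1; 2; 3; 4; 5; 6; 7; 8]%N) f i).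
  by rewrite !big_cons big_nil /f /= addr0 !addrA.
rewrite (perm_big [:: 0; 3; 6; 4; 5; 1; 7; 2; 8]%N) //.
by rewrite !big_cons big_nil /f /= addr0 !addrA.
Qed.

Section HprodAssocStep.
Variables (k l m : nat) (F G H : Hz).
Local Notation A := (zcons k F).
Local Notation B := (zcons l G).
Local Notation C := (zcons m H).
Local Notation assoc X Y Z := (hprod (hprod X Y) Z = hprod X (hprod Y Z)).

(* Expanding both sides with [hprod_zcons] gives nine terms each; after regrouping they
   match pairwise through the seven hypotheses. *)
Lemma hprodA_zcons : assoc F B C -> assoc A B H -> assoc F B H -> assoc A G C ->
  assoc A G H -> assoc F G C -> assoc F G H -> assoc A B C.
Proof.
move=> eFBC eABH eFBH eAGC eAGH eFGC eFGH.
rewrite [hprod A B]hprod_zcons [hprod B C]hprod_zcons.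
rewrite !hprodDl !hprodDr !hprod_zcons addr_regroup_mid addr_regroup_first.
rewrite -!zconsD -!hprodDl -(hprod_zcons k l) -!hprodDr -(hprod_zcons l m).
by rewrite eFBC eABH eFBH eAGC eAGH eFGC eFGH addnA.
Qed.

End HprodAssocStep.

Lemma hprodA_monomial u v w :
  hprod (hprod << u >> << v >>) << w >> = hprod << u >> (hprod << v >> << w >>).
Proof.
have [n] := ubnP (size u + size v + size w)%N.
elim: n u v w => // n IH u v w hs.
case: u hs => [|k u] hs; first by rewrite !hprod1l.
case: v hs => [|l v] hs; first by rewrite hprod1l hprod1r.
case: w hs => [|m w] hs; first by rewrite !hprod1r.
rewrite -[<< k :: u >>]zconsU -[<< l :: v >>]zconsU -[<< m :: w >>]zconsU.
by apply: hprodA_zcons; rewrite ?zconsU; apply: IH; move: hs => /=; lia.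
Qed.

Lemma hprodA F G H : hprod (hprod F G) H = hprod F (hprod G H).
Proof.
have hlL := hprod_linearl; have hrL := hprod_linearr.
move: F; apply: linear_malg_ext => [||u].
- exact: linear_fun_comp (hlL _) (hlL _).
- exact: hlL.
move: G; apply: linear_malg_ext => [||v].
- exact: linear_fun_comp (hlL _) (hrL _).
- exact: linear_fun_comp (hrL _) (hlL _).
move: H; apply: linear_malg_ext => [||w].
- exact: hrL.
- exact: linear_fun_comp (hrL _) (hrL _).
exact: hprodA_monomial.
Qed.

Lemma hprodAC F G H : hprod (hprod F G) H = hprod (hprod F H) G.
Proof. by rewrite !hprodA [hprod G H]hprodC. Qed.

Lemma hprodCA F G H : hprod F (hprod G H) = hprod G (hprod F H).
Proof. by rewrite -!hprodA [hprod F G]hprodC. Qed.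

Fixpoint dacc (k : nat) (s : seq nat) : Hz :=
  if s is l :: s' then zcons k (dacc l s') + dacc (k + l) s' else << [:: k] >>.

Definition dz (s : seq nat) : Hz := if s is k :: s' then dacc k s' else << [::] >>.

Lemma dacc_split k s :
  dacc k s = \sum_(0 <= i < (size s).+1) zcons (k + sumn (take i s)) (dz (drop i s)).
Proof.
elim: s k => [|l s IHs] k; first by rewrite big_nat1 addn0 zconsU.
rewrite big_nat_recl // take0 drop0 addn0 [dacc _ _]/= [dacc (k + l) s]IHs; congr (_ + _).
by apply: eq_bigr => i _; rewrite [take _ _]/= [drop _ _]/= [sumn _]/= addnA.
Qed.

Lemma dz_split {s : seq nat} : s != [::] ->
  dz s = \sum_(0 <= i < size s) zcons (sumn (take i.+1 s)) (dz (drop i.+1 s)).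
Proof. by case: s => [//|k s] _; rewrite /= dacc_split. Qed.

Definition dprefix (s : seq nat) (P : Hz) : Hz :=
  \sum_(0 <= i < size s) zcons (sumn (take i.+1 s)) (hprod P (dz (drop i.+1 s))).

Lemma dprefix1 s : s != [::] -> dprefix s << [::] >> = dz s.
Proof. by move=> sn; rewrite (dz_split sn); apply: eq_bigr => i _; rewrite hprod1l. Qed.

Lemma dprefix_nil P : dprefix [::] P = 0.
Proof. by rewrite /dprefix big_geq. Qed.

Lemma dprefix_cons x s P :
  dprefix (x :: s) P = zcons x (hprod P (dz s))
    + \sum_(0 <= i < size s) zcons (x + sumn (take i.+1 s)) (hprod P (dz (drop i.+1 s))).
Proof. by rewrite /dprefix big_nat_recl //= take0 drop0 addn0. Qed.

Lemma hprod_zcons_dz x P s :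
  hprod (zcons x P) (dz s) = dprefix (x :: s) P + dprefix s (zcons x P).
Proof.
have [->|sn] := eqVneq s [::].
  by rewrite dprefix_cons dprefix_nil /= !hprod1r big_geq // !addr0.
rewrite {1}(dz_split sn) (linear_fun_sum (hprod_linearr _)).
rewrite (eq_bigr _ (fun i _ => hprod_zcons _ _ _ _)) !big_split /=.
rewrite -(linear_fun_sum (zcons_linear x)) -(linear_fun_sum (hprod_linearr P)).
by rewrite -(dz_split sn) dprefix_cons /dprefix addrAC.
Qed.

(* By [hprod_zcons_dz], consecutive terms share a [dprefix] summand: the sum telescopes. *)
Lemma dz_antipode {t : seq nat} : t != [::] ->
  \sum_(0 <= j < (size t).+1) (-1) ^+ j *: hprod << rev (take j t) >> (dz (drop j t)) = 0.
Proof.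
move=> tn; pose V j := dprefix (drop j t) << rev (take j t) >>.
have hprod_succ j : (j < size t)%N ->
    hprod << rev (take j.+1 t) >> (dz (drop j.+1 t)) = V j + V j.+1.
  move=> jt; rewrite (take_nth 0 jt) rev_rcons -zconsU hprod_zcons_dz.
  by rewrite -(drop_nth 0 jt) zconsU -rev_rcons -take_nth.
rewrite big_nat_recl // expr0 scale1r take0 drop0 [rev [::]]/= hprod1l.
rewrite (telescope_sumr_eq (fun j => (-1) ^+ j *: V j)) // => [|j /andP[_ jt]].
  by rewrite /V drop_size dprefix_nil scaler0 expr0 scale1r take0 drop0 dprefix1 // add0r addrN.
by rewrite hprod_succ // exprS mulN1r !scaleNr scalerDr opprD; apply: addrC.
Qed.

Lemma dz_antipode_nseq c p :
  \sum_(0 <= j < p.+1) (-1) ^+ j *: hprod << nseq j c >> (dz (nseq (p - j) c)) =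
  if p == 0%N then << [::] >> else 0.
Proof.
case: p => [|p]; first by rewrite big_nat1 expr0 scale1r hprod1l.
rewrite -[RHS](@dz_antipode (nseq p.+1 c)) // size_nseq.
apply: eq_big_nat => j /andP[_ hj].
by rewrite take_nseq 1?rev_nseq ?drop_nseq //; lia.
Qed.

Lemma sum_nat_triangle {V : nmodType} (F : nat -> nat -> V) m :
  \sum_(0 <= j < m.+1) \sum_(0 <= k < (m - j).+1) F j k =
  \sum_(0 <= k < m.+1) \sum_(0 <= j < (m - k).+1) F j k.
Proof.
have widen (G : nat -> V) j : (j <= m)%N ->
    \sum_(0 <= k < (m - j).+1) G k = \sum_(0 <= k < m.+1 | (j + k <= m)%N) G k.
  move=> jm; rewrite (big_nat_widen _ _ m.+1) /=; last lia.
  by apply: eq_bigl => k; apply/idP/idP; lia.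
transitivity (\sum_(0 <= j < m.+1) \sum_(0 <= k < m.+1) if (j + k <= m)%N then F j k else 0).
  by apply: eq_big_nat => j /andP[_ jm]; rewrite widen ?[LHS]big_mkcond //; lia.
rewrite exchange_big_nat; apply: eq_big_nat => k /andP[_ km].
rewrite widen ?[RHS]big_mkcond; last lia.
by apply: eq_bigr => j _; rewrite addnC.
Qed.

Lemma take_nseq_cat (T : Type) (c : T) m j s : (j <= m)%N -> take j (nseq m c ++ s) = nseq j c.
Proof. by move=> jm; rewrite takel_cat ?size_nseq // take_nseq. Qed.

Lemma drop_nseq_cat (T : Type) (c : T) m j s : (j <= m)%N ->
  drop j (nseq m c ++ s) = nseq (m - j) c ++ s.
Proof.
move=> jm; rewrite drop_cat size_nseq; case: ltnP => [jm'|mj]; first by rewrite drop_nseq.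
have -> : j = m by lia.
by rewrite subnn drop0.
Qed.

Section ThreeBlocks.
Variables (a b c n : nat).

Definition hword l k : seq nat := nseq l a ++ b :: nseq k c.

Definition dlhs m : Hz := dz (nseq m c ++ b :: nseq n a).

Definition drhs m : Hz := \sum_(0 <= k < m.+1) \sum_(0 <= l < n.+1)
  (-1) ^+ (k + l) *: hprod (hprod << hword l k >> (dz (nseq (m - k) c))) (dz (nseq (n - l) a)).

(* The terms of [dz_antipode] for z_c^m z_b z_a^n whose split point lies in the z_a block. *)
Definition antipode_tail m : Hz :=
  \sum_(0 <= l < n.+1) (-1) ^+ l *: hprod << hword l m >> (dz (nseq (n - l) a)).

Lemma dlhs_rec m :
  \sum_(0 <= j < m.+1) (-1) ^+ j *: hprod << nseq j c >> (dlhs (m - j)) =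
  (-1) ^+ m *: antipode_tail m.
Proof.
set t := nseq m c ++ b :: nseq n a.
have tn : t != [::] by rewrite /t; case: (m).
have take_t : take m.+1 t = rcons (nseq m c) b.
  by rewrite /t -cat_rcons take_size_cat // size_rcons size_nseq.
have drop_t : drop m.+1 t = nseq n a.
  by rewrite /t -cat_rcons drop_size_cat // size_rcons size_nseq.
have c_block : \sum_(0 <= j < m.+1) (-1) ^+ j *: hprod << rev (take j t) >> (dz (drop j t))
    = \sum_(0 <= j < m.+1) (-1) ^+ j *: hprod << nseq j c >> (dlhs (m - j)).
  apply: eq_big_nat => j /andP[_ jm].
  by rewrite /t take_nseq_cat ?drop_nseq_cat ?rev_nseq //; lia.
have a_block : \sum_(0 <= l < n.+1) (-1) ^+ (l + m.+1) *:
      hprod << rev (take (l + m.+1) t) >> (dz (drop (l + m.+1) t))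
    = - ((-1) ^+ m *: antipode_tail m).
  rewrite /antipode_tail scaler_sumr -sumrN; apply: eq_big_nat => l /andP[_ ln].
  rewrite -drop_drop drop_t drop_nseq [in take _ _]addnC takeD take_t drop_t.
  rewrite take_nseq // rev_cat rev_rcons !rev_nseq -/(hword l m).
  by rewrite exprD exprS mulN1r mulrN scaleNr scalerA mulrC.
have := dz_antipode tn.
have -> : (size t).+1 = (m.+1 + n.+1)%N by rewrite size_cat /= !size_nseq; lia.
rewrite (big_cat_nat _ (n := m.+1)) //=; last lia.
rewrite (big_addn 0 _ m.+1) addKn c_block a_block => /eqP.
by rewrite addr_eq0 opprK => /eqP.
Qed.

Lemma drhsE m : drhs m =
  \sum_(0 <= k < m.+1) hprod ((-1) ^+ k *: antipode_tail k) (dz (nseq (m - k) c)).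
Proof.
apply: eq_bigr => k _; rewrite /antipode_tail scaler_sumr hprod_suml.
by apply: eq_bigr => l _; rewrite scalerA -exprD !hprodZl hprodAC.
Qed.

Lemma drhs_rec m :
  \sum_(0 <= j < m.+1) (-1) ^+ j *: hprod << nseq j c >> (drhs (m - j)) =
  (-1) ^+ m *: antipode_tail m.
Proof.
pose T k := (-1) ^+ k *: antipode_tail k.
transitivity (\sum_(0 <= k < m.+1) hprod (T k) (\sum_(0 <= j < (m - k).+1)
    (-1) ^+ j *: hprod << nseq j c >> (dz (nseq (m - k - j) c)))).
  under eq_bigr do rewrite drhsE hprod_sumr scaler_sumr.
  rewrite (sum_nat_triangle (fun j k => (-1) ^+ j *:
    hprod << nseq j c >> (hprod (T k) (dz (nseq (m - j - k) c))))).
  apply: eq_big_nat => k _; rewrite hprod_sumr; apply: eq_bigr => j _.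
  by rewrite hprodZr hprodCA subnAC.
rewrite big_nat_recr //= subnn dz_antipode_nseq eqxx hprod1r big1_seq ?add0r // => k.
rewrite mem_index_iota => /andP[_ km].
by rewrite dz_antipode_nseq ifF ?(linear_fun0 (hprod_linearr _)) //; lia.
Qed.

Lemma dlhs_drhs m : dlhs m = drhs m.
Proof.
elim/ltn_ind: m => m IH.
have := dlhs_rec m; rewrite -drhs_rec !big_nat_recl // subn0 expr0 !scale1r !hprod1l.
under eq_big_nat => j /andP[_ jm] do [rewrite IH; last by lia].
exact: addIr.
Qed.

End ThreeBlocks.

Local Notation Hw := {malg rat[word]}.

Definition malg_of_poly (p : Defs.poly) : Hw := \sum_(cw <- p) cw.1 *: << cw.2 >>.

Lemma coef_malg_of_poly p w : coef p w = (malg_of_poly p)@_w.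
Proof.
rewrite /coef /malg_of_poly raddf_sum big_mkcond /=; apply: eq_bigr => cw _.
by rewrite mcoeffZ mcoeffU; case: eqP => _; rewrite ?mulr1 ?mulr0.
Qed.

Lemma peq_malg_of_poly p q : malg_of_poly p = malg_of_poly q -> peq p q.
Proof. by move=> e w; rewrite !coef_malg_of_poly e. Qed.

Lemma malg_of_poly_flatten (ps : seq Defs.poly) :
  malg_of_poly (flatten ps) = \sum_(p <- ps) malg_of_poly p.
Proof. exact: big_flatten. Qed.

Lemma malg_of_polyZ a p : malg_of_poly (pscale a p) = a *: malg_of_poly p.
Proof.
rewrite /malg_of_poly big_map scaler_sumr; apply: eq_bigr => cw _.
by rewrite scalerA.
Qed.

Lemma malg_of_pword w : malg_of_poly (pword w) = << w >>.
Proof. by rewrite /malg_of_poly big_seq1 scale1r. Qed.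

Lemma malg_of_poly_map (T : Type) (r : seq T) (c : T -> rat) (key : T -> word) :
  malg_of_poly [seq (c x, key x) | x <- r] = \sum_(x <- r) c x *: << key x >>.
Proof. by rewrite /malg_of_poly big_map. Qed.

Definition zword : Hz -> Hw := linext (fun s => << fromz s >>).
Definition zindex : Hw -> Hz := linext (fun w => << toz w >>).

Lemma zword_linear : linear zword.
Proof. exact: linext_linear. Qed.

Lemma zindex_malg_of_poly p :
  zindex (malg_of_poly p) = \sum_(cw <- p) cw.1 *: << toz cw.2 >>.
Proof. exact: linext_sum. Qed.

Lemma malg_of_harm p q :
  malg_of_poly (harm p q) =
  zword (hprod (zindex (malg_of_poly p)) (zindex (malg_of_poly q))).
Proof.
rewrite /harm malg_of_poly_flatten big_flatten big_map !zindex_malg_of_poly.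
rewrite hprod_suml (linear_fun_sum zword_linear); apply: eq_bigr => cw _.
rewrite big_map hprodZl hprod_sumr scaler_sumr (linear_fun_sum zword_linear).
apply: eq_bigr => dv _; rewrite hprodZr hprodU !(linear_funZ zword_linear) /zword linext_sum.
rewrite malg_of_poly_map scalerA scaler_sumr; apply: eq_bigr => e _.
by rewrite scalerA.
Qed.

(* Index sequences containing 0 do not come from words: z_0 and z_1 are both y, and
   [toz] inverts [fromz] only on positive sequences. *)
Definition pos_index : pred (seq nat) := all (fun k => 0 < k)%N.

Lemma pos_suppP (F : Hz) :
  {subset msupp F <= pos_index} <-> forall s, ~~ pos_index s -> F@_s = 0.
Proof.
split=> [hF s hs|h s]; first by apply: mcoeff_outdom; apply: contra hs; apply: hF.
by rewrite -mcoeff_neq0; apply: contraR => hs; apply/eqP; apply: h.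
Qed.

Lemma pos_supp_linext (K : choiceType) (h : K -> Hz) g :
  {in msupp g, forall k, {subset msupp (h k) <= pos_index}} ->
  {subset msupp (linext h g) <= pos_index}.
Proof.
move=> hh; apply/pos_suppP => s hs; rewrite mcoeff_linext big_seq big1 // => k kg.
by rewrite (pos_suppP _).1 ?mulr0 //; apply: hh.
Qed.

Lemma pos_suppD (F G : Hz) : {subset msupp F <= pos_index} ->
  {subset msupp G <= pos_index} -> {subset msupp (F + G) <= pos_index}.
Proof.
move=> /pos_suppP hF /pos_suppP hG; apply/pos_suppP => s hs.
by rewrite mcoeffD hF // hG // addr0.
Qed.

Lemma pos_suppU s : pos_index s -> {subset msupp (<< s >> : Hz) <= pos_index}.
Proof.
move=> hs; apply/pos_suppP => s' hs'; rewrite mcoeffU.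
by case: eqP => // e; rewrite -e hs in hs'.
Qed.

Lemma pos_supp_zcons k F : (0 < k)%N -> {subset msupp F <= pos_index} ->
  {subset msupp (zcons k F) <= pos_index}.
Proof.
move=> k0 hF; apply: pos_supp_linext => s /hF hs.
by apply: pos_suppU; rewrite /= k0.
Qed.

Lemma pos_supp_harmw u v : pos_index u -> pos_index v ->
  {subset msupp (harmw u v) <= pos_index}.
Proof.
elim: u v => [|k u IHu] v; first by rewrite harmw_nill => _; apply: pos_suppU.
elim: v => [|l v IHv]; first by rewrite harmw_nilr => pu _; apply: pos_suppU.
move=> pku plv; move: (pku) (plv) => /andP[k0 pu] /andP[l0 pv].
rewrite harmw_cons; apply: pos_suppD; first apply: pos_suppD.
- exact: pos_supp_zcons (IHu _ pu plv).
- exact: pos_supp_zcons (IHv pku pv).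
- by apply: pos_supp_zcons (IHu _ pu pv); rewrite addn_gt0 k0.
Qed.

Lemma pos_supp_hprod F G : {subset msupp F <= pos_index} ->
  {subset msupp G <= pos_index} -> {subset msupp (hprod F G) <= pos_index}.
Proof.
move=> hF hG; apply: pos_supp_linext => u /hF hu.
by apply: pos_supp_linext => v /hG hv; apply: pos_supp_harmw.
Qed.

Lemma pos_supp_dz s : pos_index s -> {subset msupp (dz s) <= pos_index}.
Proof.
case: s => [|k s] /=; first by move=> _; apply: pos_suppU.
elim: s k => [|l s IHs] k /andP[k0 ps]; first by apply: pos_suppU; rewrite /= k0.
move: ps => /= /andP[l0 ps]; apply: pos_suppD.
  by apply: pos_supp_zcons => //; apply: IHs; rewrite l0.
by apply: IHs; rewrite addn_gt0 k0.
Qed.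

Lemma toz_aux_nseq m j w : toz_aux m (nseq j lx ++ w) = toz_aux (m + j) w.
Proof. by elim: j m => [|j IHj] m; rewrite ?addn0 //= IHj addnS. Qed.

Lemma fromz_cons k s : fromz (k :: s) = nseq k.-1 lx ++ ly :: fromz s.
Proof. by rewrite /fromz /= /z cat_rcons. Qed.

Lemma toz_fromz s : pos_index s -> toz (fromz s) = s.
Proof.
elim: s => [//|k s IHs] /andP[k0 ps].
by rewrite fromz_cons /toz toz_aux_nseq /= -/(toz (fromz s)) IHs // prednK.
Qed.

Lemma zwordK F : {subset msupp F <= pos_index} -> zindex (zword F) = F.
Proof.
move=> hF; rewrite /zword linext_comp; last exact: linext_linear.
rewrite -[RHS]linext_unit; apply: eq_in_linext => s /hF hs.
by rewrite /= /zindex linextU1 toz_fromz.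
Qed.

Definition catl (u : word) : Hw -> Hw := linext (fun v => << u ++ v >>).
Definition catr (v : word) : Hw -> Hw := linext (fun u => << u ++ v >>).

Lemma catl_linear u : linear (catl u). Proof. exact: linext_linear. Qed.
Lemma catr_linear v : linear (catr v). Proof. exact: linext_linear. Qed.
Lemma catlU u v : catl u << v >> = << u ++ v >>. Proof. exact: linextU1. Qed.
Lemma catrU u v : catr v << u >> = << u ++ v >>. Proof. exact: linextU1. Qed.

Lemma catl_catr u v F : catr v (catl u F) = catl u (catr v F).
Proof.
move: F; apply: linear_malg_ext => [||w].
- exact: linear_fun_comp (catr_linear v) (catl_linear u).
- exact: linear_fun_comp (catl_linear u) (catr_linear v).
by rewrite catlU catrU catrU catlU catA.
Qed.

Lemma catlA u1 u2 F : catl u1 (catl u2 F) = catl (u1 ++ u2) F.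
Proof.
move: F; apply: linear_malg_ext => [||w].
- exact: linear_fun_comp (catl_linear _) (catl_linear _).
- exact: catl_linear.
by rewrite !catlU catA.
Qed.

Lemma catl0 F : catl [::] F = F.
Proof. by rewrite -[RHS]linext_unit; apply: eq_linext. Qed.

Lemma malg_of_pmul p q :
  malg_of_poly (pmul p q) = \sum_(cw <- p) cw.1 *: catl cw.2 (malg_of_poly q).
Proof.
rewrite /pmul malg_of_poly_flatten big_map; apply: eq_bigr => cw _.
rewrite malg_of_poly_map /catl linext_sum scaler_sumr; apply: eq_bigr => dv _.
by rewrite scalerA.
Qed.

Lemma malg_of_pmul_pword p v : malg_of_poly (pmul p (pword v)) = catr v (malg_of_poly p).
Proof.
rewrite malg_of_pmul malg_of_pword /catr linext_sum; apply: eq_bigr => cw _.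
by rewrite catlU.
Qed.

Definition gamma_y (w : word) : Hw := malg_of_poly (pmul (gamma_word w) (pword [:: ly])).

Lemma gamma_y_cons b w :
  gamma_y (b :: w) = \sum_(cw <- gamma_letter b) cw.1 *: catl cw.2 (gamma_y w).
Proof.
rewrite /gamma_y malg_of_pmul_pword [gamma_word _]/= malg_of_pmul.
rewrite (linear_fun_sum (catr_linear _)); apply: eq_bigr => cw _.
by rewrite (linear_funZ (catr_linear _)) catl_catr malg_of_pmul_pword.
Qed.

Lemma gamma_y_nil : gamma_y [::] = << [:: ly] >>.
Proof. by rewrite /gamma_y malg_of_pmul_pword /= malg_of_pword catrU. Qed.

Lemma gamma_y_nseq j w : gamma_y (nseq j lx ++ w) = catl (nseq j lx) (gamma_y w).
Proof.
elim: j => [|j IHj]; first by rewrite catl0.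
by rewrite [nseq _ _ ++ _]/= gamma_y_cons big_seq1 scale1r IHj catlA.
Qed.

Lemma gamma_y_ly w : gamma_y (ly :: w) = catl [:: lx] (gamma_y w) + catl [:: ly] (gamma_y w).
Proof. by rewrite gamma_y_cons /= big_cons big_seq1 !scale1r. Qed.

Lemma zword_zcons k F : zword (zcons k F) = catl (z k) (zword F).
Proof.
move: F; apply: linear_malg_ext => [||s].
- exact: linear_fun_comp zword_linear (zcons_linear k).
- exact: linear_fun_comp (catl_linear _) zword_linear.
by rewrite zconsU /zword !linextU1 catlU.
Qed.

(* [fromz (k :: s)] is x^(k-1) (zbody s) y; [d_word] applies gamma to all but that final y. *)
Fixpoint zbody (s : seq nat) : word :=
  if s is l :: s' then ly :: nseq l.-1 lx ++ zbody s' else [::].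

Lemma fromz_rcons k s : fromz (k :: s) = rcons (nseq k.-1 lx ++ zbody s) ly.
Proof.
elim: s k => [|l s IHs] k; first by rewrite fromz_cons /= cats0 cats1.
by rewrite fromz_cons IHs [zbody _]/= !rcons_cat rcons_cons rcons_cat.
Qed.

Lemma gamma_y_dacc k s : (0 < k)%N -> pos_index s ->
  gamma_y (nseq k.-1 lx ++ zbody s) = zword (dacc k s).
Proof.
elim: s k => [|l s IHs] k k0.
  by rewrite [zbody _]/= gamma_y_nseq gamma_y_nil catlU /zword linextU1 /fromz /= cats0 /z cats1.
move=> /andP[l0 ps]; rewrite [zbody _]/= gamma_y_nseq gamma_y_ly.
rewrite (linear_funD (catl_linear _)) !catlA.
set G := gamma_y (nseq l.-1 lx ++ zbody s).
have merge : catl (nseq k.-1 lx ++ [:: lx]) G = zword (dacc (k + l) s).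
  have -> : nseq k.-1 lx ++ [:: lx] = nseq k lx.
    by rewrite -[[:: lx]]/(nseq 1 lx) -nseqD addn1 prednK.
  rewrite -gamma_y_nseq catA -nseqD -IHs ?addn_gt0 ?k0 //.
  by congr (gamma_y (nseq _ _ ++ _)); lia.
have prepend : catl (nseq k.-1 lx ++ [:: ly]) G = zword (zcons k (dacc l s)).
  by rewrite zword_zcons -IHs // /z cats1.
by rewrite merge prepend /= (linear_funD zword_linear) addrC.
Qed.

Lemma malg_of_d_fromz s : pos_index s -> malg_of_poly (d (pword (fromz s))) = zword (dz s).
Proof.
rewrite /d /pword /= cats0 malg_of_polyZ scale1r.
case: s => [|k s]; first by move=> _; rewrite /d_word /= /zword linextU1 malg_of_pword.
move=> /andP[k0 ps]; rewrite fromz_rcons /d_word.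
have -> : (rcons (nseq k.-1 lx ++ zbody s) ly == [::]) = false by case: (_ ++ _).
by rewrite last_rcons size_rcons /= -cats1 take_size_cat //; apply: gamma_y_dacc.
Qed.

Lemma zindex_pword_fromz s : pos_index s -> zindex (malg_of_poly (pword (fromz s))) = << s >>.
Proof. by move=> ps; rewrite malg_of_pword /zindex linextU1 toz_fromz. Qed.

Lemma zindex_d_fromz s : pos_index s -> zindex (malg_of_poly (d (pword (fromz s)))) = dz s.
Proof. by move=> ps; rewrite malg_of_d_fromz // zwordK //; apply: pos_supp_dz. Qed.

Lemma fromz_cat s1 s2 : fromz (s1 ++ s2) = fromz s1 ++ fromz s2.
Proof. by rewrite /fromz map_cat flatten_cat. Qed.

Lemma zpowE k j : zpow k j = fromz (nseq j k).
Proof. by rewrite /zpow /fromz map_nseq. Qed.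

Lemma zE k : z k = fromz [:: k].
Proof. by rewrite /fromz /= cats0. Qed.

Lemma pos_index_nseq j k : (0 < k)%N -> pos_index (nseq j k).
Proof. by move=> k0; rewrite /pos_index all_nseq k0 orbT. Qed.

Theorem proposition2p4 (a b c : nat) (ha : (0 < a)%N) (hb : (0 < b)%N) (hc : (0 < c)%N)
  (m n : nat) :
  peq (d (pword (zpow c m ++ z b ++ zpow a n)))
      (psum [seq pscale ((-1) ^+ (k + l))
                  (harm (harm (pword (zpow a l ++ z b ++ zpow c k))
                              (d (pword (zpow c (m - k)))))
                        (d (pword (zpow a (n - l)))))
            | k <- iota 0 m.+1, l <- iota 0 n.+1]).
Proof.
have pos3 x i j y : (0 < x)%N -> (0 < y)%N -> pos_index (nseq i x ++ b :: nseq j y).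
  by move=> x0 y0; rewrite /pos_index all_cat /= !all_nseq x0 y0 hb !orbT.
apply: peq_malg_of_poly; rewrite !zpowE zE -!fromz_cat cat1s.
rewrite malg_of_d_fromz ?pos3 // -/(dlhs a b c n m) dlhs_drhs.
rewrite /psum malg_of_poly_flatten big_flatten big_map (linear_fun_sum zword_linear).
apply: eq_bigr => k _; rewrite big_map (linear_fun_sum zword_linear); apply: eq_bigr => l _.
rewrite malg_of_polyZ (linear_funZ zword_linear) !malg_of_harm !zpowE -!fromz_cat cat1s.
rewrite -/(hword a b c l k) zindex_pword_fromz ?pos3 // !zindex_d_fromz ?pos_index_nseq //.
rewrite zwordK //; apply: pos_supp_hprod; first by apply: pos_suppU; apply: pos3.
by apply: pos_supp_dz; apply: pos_index_nseq.
Qed.
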